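(* Let $\mathcal{G}$ be a finite groupoid and let $\mathcal{H}$ be a connected wide subgroupoid of $\mathcal{G}$. Then $\mathbb{C}[\mathcal{G}/\mathcal{H}]\cong\mathrm{Ind}^\mathcal{G}_\mathcal{H}\mathrm{Tri}$ as functors $\mathcal{G}\to\mathbf{vect}$.
   Context: A groupoid is a category in which every morphism is invertible; all groupoids are finite and nonempty; $gg'$ denotes composition. A subgroupoid is wide if it contains all objects, connected if any two of its objects are joined by one of its morphisms. For $x\in\mathcal{G}_0$ let $\mathrm{Mor}_\mathcal{G}(-,x):=\coprod_{y\in\mathcal{G}_0}\mathcal{G}(y,x)$, with the equivalence relation $a\sim_{\mathcal{H},x}b\iff a^{-1}b\in\mathcal{H}_1$; write $a\mathcal{H}$ for the class of $a$. The $\mathcal{G}$-set $\mathcal{G}/\mathcal{H}:\mathcal{G}\to\mathbf{set}$ sends $x$ to $\mathrm{Mor}_\mathcal{G}(-,x)/\sim_{\mathcal{H},x}$ and $g:x\to y$ to $a\mathcal{H}\mapsto ga\mathcal{H}$. $\mathbf{vect}$ is the category of finite-dimensional complex vector spaces; $F:\mathbf{set}\to\mathbf{vect}$ is the free vector space functor (left adjoint of the forgetful functor), and for a $\mathcal{G}$-set $X$, $\mathbb{C}[X]:=F\circ X$. $\mathrm{Tri}:\mathcal{H}\to\mathbf{vect}$ is the trivial representation ($x\mapsto\mathbb{C}$, morphisms $\mapsto\mathrm{id}_\mathbb{C}$), and $\mathrm{Ind}^\mathcal{G}_\mathcal{H}:\mathbf{vect}^\mathcal{H}\to\mathbf{vect}^\mathcal{G}$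 is the left adjoint of restriction along the inclusion $\mathcal{H}\hookrightarrow\mathcal{G}$ (left Kan extension along the inclusion). *)

From HB Require Import structures.
From mathcomp Require Import all_boot all_algebra.
From mathcomp Require Import complex.
From mathcomp Require Import reals Rstruct.
Unset Printing Implicit Defensive.
Import GRing.Theory.
Local Open Scope ring_scope.

Definition Cfield : fieldType := Rdefinitions.R[i].

(* A finite (nonempty) groupoid.  gcomp g g' is the composite  g g'
   (first g', then g). *)
Record groupoid := Groupoid {
  gobj : finType;
  ghom : gobj -> gobj -> finType;
  gid : forall x, ghom x x;
  gcomp : forall {x y z}, ghom y z -> ghom x y -> ghom x z;
  ginv : forall {x y}, ghom x y -> ghom y x;
  gcompA : forall x y z w (f : ghom z w) (g : ghom y z) (h : ghom x y),
      gcomp f (gcomp g h) = gcomp (gcomp f g) h;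
  gcomp1r : forall x y (f : ghom x y), gcomp f (gid x) = f;
  gcomp1l : forall x y (f : ghom x y), gcomp (gid y) f = f;
  ginvr : forall x y (f : ghom x y), gcomp f (ginv f) = gid y;
  ginvl : forall x y (f : ghom x y), gcomp (ginv f) f = gid x;
  gobj_nonempty : (0 < #|gobj|)%N
}.
Arguments gid {_} _.
Arguments gcomp {_ _ _ _}.
Arguments ginv {_ _ _}.
Arguments ghom : clear implicits.

Section Groupoids.
Variable G : groupoid.

Definition subgpred := forall x y : gobj G, ghom G x y -> bool.

Definition is_subgroupoid (H : subgpred) : Prop :=
  [/\ forall x y z (g : ghom G y z) (g' : ghom G x y),
        H y z g -> H x y g' -> H x z (gcomp g g'),
      forall x y (g : ghom G x y), H x y g -> H y x (ginv g)
    & forall x y (g : ghom G x y), H x y g -> H x x (gid x) && H y y (gid y)].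

Definition wide (H : subgpred) : Prop := forall x, H x x (gid x).

Definition connected (H : subgpred) : Prop :=
  forall x y : gobj G, exists h : ghom G x y, H x y h.

Variable H : subgpred.

Definition Mor (x : gobj G) : finType := {y : gobj G & ghom G y x}.

Definition simH x (a b : Mor x) : bool :=
  H (tag b) (tag a) (gcomp (ginv (tagged a)) (tagged b)).

Definition cls x (a : Mor x) : {set Mor x} := [set b | simH x a b].

Definition quot (x : gobj G) : finType :=
  {C : {set Mor x} | [exists a, C == cls x a]}.

Definition repr_of x (C : quot x) : Mor x :=
  odflt (Tagged (fun y => ghom G y x) (gid x)) [pick b in val C].

Definition postc x y (g : ghom G x y) (a : Mor x) : Mor y :=
  Tagged (fun z => ghom G z y) (gcomp g (tagged a)).

Lemma cls_in_quot x (a : Mor x) : [exists a', cls x a == cls x a'].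
Proof. by apply/existsP; exists a. Qed.

Definition quot_act x y (g : ghom G x y) (C : quot x) : quot y :=
  exist _ (cls y (postc x y g (repr_of x C))) (cls_in_quot y _).

End Groupoids.
Arguments is_subgroupoid {G}.
Arguments wide {G}.
Arguments connected {G}.

Section Reps.
Variable K : fieldType.
Variable G : groupoid.

Record prerep := PreRep {
  rsp : gobj G -> vectType K;
  ract : forall x y, ghom G x y -> 'Hom(rsp x, rsp y)
}.
Arguments ract _ {_ _}.

Definition is_rep (V : prerep) : Prop :=
  (forall x, ract V (gid x) = \1%VF) /\
  (forall x y z (g : ghom G y z) (g' : ghom G x y),
      ract V (gcomp g g') = (ract V g \o ract V g')%VF).

Definition is_nat {V W : prerep} (t : forall x, 'Hom(rsp V x, rsp W x)) : Prop :=
  forall x y (g : ghom G x y), (t y \o ract V g = ract W g \o t x)%VF.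

Definition is_natH (H : subgpred G) {V W : prerep}
    (t : forall x, 'Hom(rsp V x, rsp W x)) : Prop :=
  forall x y (g : ghom G x y), H x y g ->
    (t y \o ract V g = ract W g \o t x)%VF.

Definition rep_iso (V W : prerep) : Prop :=
  exists (t : forall x, 'Hom(rsp V x, rsp W x))
         (u : forall x, 'Hom(rsp W x, rsp V x)),
    [/\ is_nat t, is_nat u &
        forall x, (u x \o t x = \1)%VF /\ (t x \o u x = \1)%VF].

(* The trivial representation x |-> C, g |-> id (its restriction to H is
   the trivial representation Tri of H). *)
Definition Tri : prerep := PreRep (fun _ => (K^o : vectType K)) (fun _ _ _ => \1%VF).

(* Free vector space functor F : set -> vect on finite sets:
   F X = K^X with basis X, F f (e_c) = e_(f c). *)
Definition FreeVect (X : finType) : vectType K := {ffun X -> K^o}.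
Definition free_map (X Y : finType) (f : X -> Y) : 'Hom(FreeVect X, FreeVect Y) :=
  linfun (fun v : FreeVect X => ([ffun d => \sum_(c | f c == d) v c] : FreeVect Y)).

Definition CGH (H : subgpred G) : prerep :=
  PreRep (fun x => FreeVect (quot G H x))
          (fun x y g => free_map _ _ (quot_act G H x y g)).

(* (I, eta) is Ind^G_H Tri together with its unit eta : Tri -> Res I, i.e. a
   universal arrow from Tri to the restriction functor (value at Tri of the
   left adjoint of restriction). *)
Definition is_Ind_Tri (H : subgpred G) (I : prerep)
    (eta : forall x, 'Hom(rsp Tri x, rsp I x)) : Prop :=
  [/\ is_rep I, is_natH H eta &
    forall W : prerep, is_rep W ->
    forall phi : forall x, 'Hom(rsp Tri x, rsp W x), is_natH H phi ->
      exists psi : forall x, 'Hom(rsp I x, rsp W x),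
        [/\ is_nat psi,
            forall x, (psi x \o eta x = phi x)%VF &
            forall psi' : forall x, 'Hom(rsp I x, rsp W x), is_nat psi' ->
              (forall x, (psi' x \o eta x = phi x)%VF) ->
              forall x, psi' x = psi x]].

End Reps.
Arguments prerep : clear implicits.
Arguments PreRep {K G}.
Arguments rsp {K G}.
Arguments ract {K G} _ {_ _}.
Arguments is_rep {K G}.
Arguments is_nat {K G V W}.
Arguments is_natH {K G} H {V W}.
Arguments rep_iso {K G}.
Arguments Tri {K G}.
Arguments CGH K {G}.
Arguments is_Ind_Tri {K G}.

From Pilot Require Import Defs.
From HB Require Import structures.
From mathcomp Require Import all_boot all_algebra.
From mathcomp Require Import complex.
From mathcomp Require Import reals Rstruct.
Import GRing.Theory.
Local Open Scope ring_scope.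

(* The basis vector of C[G/H](x) indexed by the class of id_x gives a unit
   Tri -> Res C[G/H], natural on H because h id_x H = id_x H for h in H.
   If phi : Tri -> Res W is natural on H, the vectors w_y := phi_y(1)
   satisfy W(h) w_y = w_y' for h : y -> y' in H, so aH |-> W(a) w_(source a)
   is well defined and extends linearly to a natural transformation
   C[G/H] -> W through which phi factors; it is the only one, since every
   basis vector aH is the image of the unit class under a.  Universal
   arrows are unique up to isomorphism. *)

Arguments gcompA {_ _ _ _ _}.
Arguments gcomp1r {_ _ _}.
Arguments gcomp1l {_ _ _}.
Arguments ginvr {_ _ _}.
Arguments ginvl {_ _ _}.

Section GroupoidTheory.
Variable G : groupoid.
Implicit Types x y z : gobj G.

Lemma ginv1 x : ginv (gid x) = gid x :> ghom G x x.
Proof. by rewrite -[RHS](ginvr (gid x)) gcomp1l. Qed.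

Lemma gcompK x y z (f : ghom G y z) (g : ghom G x y) :
  gcomp (ginv f) (gcomp f g) = g.
Proof. by rewrite gcompA ginvl gcomp1l. Qed.

Lemma gcompKV x y z (f : ghom G y z) (g : ghom G x z) :
  gcomp f (gcomp (ginv f) g) = g.
Proof. by rewrite gcompA ginvr gcomp1l. Qed.

Lemma ginv_unique x y (f : ghom G x y) (g : ghom G y x) :
  gcomp g f = gid x -> g = ginv f.
Proof. by move=> gf; rewrite -[g]gcomp1r -(ginvr f) gcompA gf gcomp1l. Qed.

Lemma ginvK x y (f : ghom G x y) : ginv (ginv f) = f.
Proof. by symmetry; apply: ginv_unique; rewrite ginvr. Qed.

Lemma ginvM x y z (f : ghom G y z) (g : ghom G x y) :
  ginv (gcomp f g) = gcomp (ginv g) (ginv f).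
Proof. by symmetry; apply: ginv_unique; rewrite -gcompA gcompK ginvl. Qed.

Definition mor {x y} (g : ghom G x y) : Mor G y :=
  Tagged (fun z => ghom G z y) g.

Lemma postc_mor1 x y (g : ghom G x y) : postc G x y g (mor (gid x)) = mor g.
Proof. by rewrite /postc /= gcomp1r. Qed.

Lemma postc1 x (a : Mor G x) : postc G x x (gid x) a = a.
Proof. by case: a => y f; rewrite /postc /= gcomp1l. Qed.

Lemma postcM x y z (g : ghom G y z) (g' : ghom G x y) (a : Mor G x) :
  postc G x z (gcomp g g') a = postc G y z g (postc G x y g' a).
Proof. by case: a => w f; rewrite /postc /= gcompA. Qed.

End GroupoidTheory.

Section Quotient.
Variables (G : groupoid) (H : subgpred G).
Hypotheses (subH : is_subgroupoid H) (wideH : wide H).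
Implicit Types x y z : gobj G.

Lemma simH_refl {x} (a : Mor G x) : simH G H x a a.
Proof. by rewrite /simH ginvl wideH. Qed.

Lemma simH_sym {x} (a b : Mor G x) : simH G H x a b -> simH G H x b a.
Proof.
by case: subH => _ Hinv _; rewrite /simH => /Hinv; rewrite ginvM ginvK.
Qed.

Lemma simH_trans {x} (a b c : Mor G x) :
  simH G H x a b -> simH G H x b c -> simH G H x a c.
Proof.
case: subH => Hcomp _ _; rewrite /simH => ab bc.
by have := Hcomp _ _ _ _ _ ab bc; rewrite -gcompA gcompKV.
Qed.

Lemma eq_cls {x} (a b : Mor G x) : simH G H x a b -> cls G H x a = cls G H x b.
Proof.
move=> ab; apply/setP => c; rewrite !inE; apply/idP/idP.
  exact/simH_trans/simH_sym.
exact: simH_trans.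
Qed.

Definition clsq {x} (a : Mor G x) : quot G H x :=
  exist _ (cls G H x a) (cls_in_quot G H x a).

Lemma repr_of_in {x} (C : quot G H x) : Defs.repr_of G H x C \in val C.
Proof.
rewrite /Defs.repr_of; case: pickP => [b //|].
by case: C => S /= /existsP [a /eqP ->] /(_ a); rewrite /= inE simH_refl.
Qed.

Lemma simH_repr_of {x} (a : Mor G x) :
  simH G H x a (Defs.repr_of G H x (clsq a)).
Proof. by have := repr_of_in (clsq a); rewrite inE. Qed.

Lemma clsq_repr_of {x} (C : quot G H x) : clsq (Defs.repr_of G H x C) = C.
Proof.
apply: val_inj => /=; have := repr_of_in C.
case: C => S inS /=; move: (Defs.repr_of _ _ _ _) => b.
by case/existsP: inS => a /eqP ->; rewrite inE => /eq_cls <-.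
Qed.

Lemma clsqP {x} (a b : Mor G x) : reflect (clsq a = clsq b) (simH G H x a b).
Proof.
apply: (iffP idP) => [ab|/(congr1 val) /= ab]; first exact/val_inj/eq_cls.
have : b \in cls G H x b by rewrite inE simH_refl.
by rewrite -ab inE.
Qed.

Lemma postc_simH {x y} (g : ghom G x y) (a b : Mor G x) :
  simH G H x a b -> simH G H y (postc G x y g a) (postc G x y g b).
Proof. by rewrite /simH /= ginvM -gcompA gcompK. Qed.

Lemma quot_act_clsq {x y} (g : ghom G x y) (a : Mor G x) :
  quot_act G H x y g (clsq a) = clsq (postc G x y g a).
Proof. exact/esym/clsqP/postc_simH/simH_repr_of. Qed.

Lemma quot_act1 {x} (C : quot G H x) : quot_act G H x x (gid x) C = C.
Proof.
by rewrite -[in LHS](clsq_repr_of C) quot_act_clsq postc1 clsq_repr_of.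
Qed.

Lemma quot_actM {x y z} (g : ghom G y z) (g' : ghom G x y) (C : quot G H x) :
  quot_act G H x z (gcomp g g') C = quot_act G H y z g (quot_act G H x y g' C).
Proof.
rewrite -[in LHS](clsq_repr_of C) -[in RHS](clsq_repr_of C).
by rewrite !quot_act_clsq postcM.
Qed.

End Quotient.

Section Linfun.
Variables (K : fieldType) (V W : vectType K) (f : V -> W).
Hypothesis lin_f : linear f.

Let f_lin := f.
HB.instance Definition _ := GRing.isLinear.Build K V W *:%R f_lin lin_f.

Lemma linfunE : linfun f =1 f.
Proof. exact: (lfunE f_lin). Qed.

End Linfun.

Section FreeVect.
Variable K : fieldType.
Implicit Types X Y Z : finType.

Definition unit_vec {X} (c : X) : FreeVect K X := [ffun d => (c == d)%:R].

Lemma free_mapE X Y (f : X -> Y) (v : FreeVect K X) :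
  free_map K X Y f v = [ffun d => \sum_(c | f c == d) v c].
Proof.
rewrite linfunE // => k u w; apply/ffunP => d; rewrite !ffunE.
by rewrite scaler_sumr -big_split; apply: eq_bigr => c _; rewrite !ffunE.
Qed.

Lemma free_vect_expand X (v : FreeVect K X) : v = \sum_c v c *: unit_vec c.
Proof.
apply/ffunP => d; rewrite sum_ffunE (bigD1 d) //= big1 ?addr0.
  by rewrite !ffunE eqxx [_ *: _]mulr1.
by move=> c /negbTE cd; rewrite !ffunE cd [_ *: _]mulr0.
Qed.

Lemma free_map_unit_vec X Y (f : X -> Y) (c : X) :
  free_map K X Y f (unit_vec c) = unit_vec (f c).
Proof.
rewrite free_mapE; apply/ffunP => d; rewrite !ffunE.
have [<-|fc_d] := eqVneq (f c) d.
  rewrite (bigD1 c) //= big1 ?addr0 => [|c' /andP [_ /negbTE]].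
    by rewrite ffunE eqxx.
  by rewrite ffunE eq_sym => ->.
rewrite big1 // => c' /eqP fc'_d; rewrite ffunE.
by case: eqP => // c_c'; rewrite c_c' fc'_d eqxx in fc_d.
Qed.

Lemma free_map_scale_unit_vec X Y (f : X -> Y) (k : K) (c : X) :
  free_map K X Y f (k *: unit_vec c) = k *: unit_vec (f c).
Proof. by rewrite linearZ_LR /= free_map_unit_vec. Qed.

Lemma eq_free_map X Y (f g : X -> Y) :
  f =1 g -> free_map K X Y f = free_map K X Y g.
Proof.
move=> fg; apply/lfunP => v; rewrite !free_mapE.
apply/ffunP => d; rewrite !ffunE.
by apply: eq_bigl => c; rewrite fg.
Qed.

Lemma free_map_id X (f : X -> X) : f =1 id -> free_map K X X f = \1%VF.
Proof.
move=> fid; apply/lfunP => v; rewrite id_lfunE free_mapE; apply/ffunP => d.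
by rewrite ffunE (eq_bigl (pred1 d)) ?big_pred1_eq // => c; rewrite fid.
Qed.

Lemma free_map_comp X Y Z (f : Y -> Z) (g : X -> Y) :
  free_map K X Z (f \o g) = (free_map K Y Z f \o free_map K X Y g)%VF.
Proof.
apply/lfunP => v; rewrite comp_lfunE !free_mapE.
apply/ffunP => d; rewrite !ffunE.
rewrite (partition_big g (fun b => f b == d)) //=; apply: eq_bigr => b fb.
rewrite ffunE; apply: eq_bigl => c.
by case: (eqVneq (g c) b) => [->|]; rewrite ?fb ?andbF.
Qed.

Lemma sum_free_map_scale (V : lmodType K) X Y (f : X -> Y) (v : FreeVect K X)
    (F : Y -> V) :
  \sum_y free_map K X Y f v y *: F y = \sum_x v x *: F (f x).
Proof.
rewrite [RHS](partition_big f xpredT) //; apply: eq_bigr => y _.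
by rewrite free_mapE ffunE scaler_suml; apply: eq_bigr => x /eqP ->.
Qed.

End FreeVect.

Section Representations.
Variables (K : fieldType) (G : groupoid).

Lemma rep_act1 (V : prerep K G) x u : is_rep V -> ract V (gid x) u = u.
Proof. by case=> -> _; rewrite id_lfunE. Qed.

Lemma rep_actM (V : prerep K G) x y z (g : ghom G y z) (g' : ghom G x y) u :
  is_rep V -> ract V (gcomp g g') u = ract V g (ract V g' u).
Proof. by case=> _ ->; rewrite comp_lfunE. Qed.

Lemma is_nat_id (V : prerep K G) :
  is_nat (fun x => \1%VF : 'Hom(rsp V x, rsp V x)).
Proof. by move=> x y g; rewrite comp_lfun1l comp_lfun1r. Qed.

Lemma is_nat_comp {U V W : prerep K G} {t : forall x, 'Hom(rsp U x, rsp V x)}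
    {u : forall x, 'Hom(rsp V x, rsp W x)} :
  is_nat t -> is_nat u -> is_nat (fun x => (u x \o t x)%VF).
Proof.
by move=> tn un x y g /=; rewrite -comp_lfunA tn comp_lfunA un comp_lfunA.
Qed.

Lemma Ind_Tri_endo_id {H : subgpred G} {I : prerep K G} {eta}
    {psi : forall x, 'Hom(rsp I x, rsp I x)} :
  is_Ind_Tri H I eta -> is_nat psi -> (forall x, (psi x \o eta x)%VF = eta x) ->
  forall x, psi x = \1%VF.
Proof.
case=> repI natI univI nat_psi psi_eta x.
have [lift [_ _ uniq]] := univI I repI eta natI.
rewrite (uniq psi) // (uniq (fun x => \1%VF)) //; first exact: is_nat_id.
by move=> y; rewrite comp_lfun1l.
Qed.

Lemma Ind_Tri_iso (H : subgpred G) (I1 I2 : prerep K G) eta1 eta2 :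
  is_Ind_Tri H I1 eta1 -> is_Ind_Tri H I2 eta2 -> rep_iso I1 I2.
Proof.
move=> Ind1 Ind2; have [rep1 nat1 univ1] := Ind1; have [rep2 nat2 univ2] := Ind2.
have [t [nat_t t_eta _]] := univ1 I2 rep2 eta2 nat2.
have [u [nat_u u_eta _]] := univ2 I1 rep1 eta1 nat1.
exists t, u; split => // x; split.
- apply: (Ind_Tri_endo_id Ind1 (is_nat_comp nat_t nat_u)) => y.
  by rewrite -comp_lfunA t_eta u_eta.
- apply: (Ind_Tri_endo_id Ind2 (is_nat_comp nat_u nat_t)) => y.
  by rewrite -comp_lfunA u_eta t_eta.
Qed.

End Representations.

Section InducedTrivial.
Variables (K : fieldType) (G : groupoid) (H : subgpred G).
Hypotheses (subH : is_subgroupoid H) (wideH : wide H).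

Lemma CGH_rep : is_rep (CGH K H).
Proof.
split=> [x|x y z g g'] /=; first exact/free_map_id/quot_act1.
by rewrite -free_map_comp; apply: eq_free_map => C; apply: quot_actM.
Qed.

Definition CGH_unit x : 'Hom(rsp (@Tri K G) x, rsp (CGH K H) x) :=
  linfun (fun k : K^o => k *: unit_vec K (clsq G H (mor G (gid x)))).

Lemma CGH_unitE x k : CGH_unit x k = k *: unit_vec K (clsq G H (mor G (gid x))).
Proof. by rewrite linfunE // => a u v; rewrite scalerDl scalerA. Qed.

Lemma CGH_act_unit x y (g : ghom G x y) k :
  ract (CGH K H) g (CGH_unit x k) = k *: unit_vec K (clsq G H (mor G g)).
Proof.
rewrite CGH_unitE /= free_map_scale_unit_vec.
by rewrite (quot_act_clsq _ _ subH wideH) postc_mor1.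
Qed.

Lemma CGH_unit_natH : is_natH H CGH_unit.
Proof.
move=> x y h Hh; apply/lfunP => k; rewrite !comp_lfunE id_lfunE CGH_act_unit /=.
rewrite CGH_unitE; congr (_ *: unit_vec K _); apply/(clsqP _ _ subH wideH).
by rewrite /simH /= ginv1 gcomp1l.
Qed.

Lemma unit_vec_clsq x (a : Mor G x) :
  unit_vec K (clsq G H a) = ract (CGH K H) (tagged a) (CGH_unit (tag a) 1).
Proof. by rewrite CGH_act_unit scale1r; case: a. Qed.

Section Lift.
Variables (W : prerep K G) (phi : forall x, 'Hom(rsp (@Tri K G) x, rsp W x)).
Hypotheses (repW : is_rep W) (natH_phi : is_natH H phi).

Let w x : rsp W x := phi x (1 : K^o).

Lemma phiE x (k : K^o) : phi x k = k *: w x.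
Proof. by rewrite /w -linearZ /= [_ *: _]mulr1. Qed.

Definition lift_mor {x} (a : Mor G x) : rsp W x :=
  ract W (tagged a) (w (tag a)).

Lemma lift_mor_simH x (a b : Mor G x) :
  simH G H x a b -> lift_mor a = lift_mor b.
Proof.
move=> /natH_phi /lfunP /(_ 1); rewrite !comp_lfunE id_lfunE /= -/(w _) -/(w _).
by rewrite /lift_mor => ->; rewrite -rep_actM // gcompKV.
Qed.

Definition lift_cls {x} (C : quot G H x) : rsp W x :=
  lift_mor (Defs.repr_of G H x C).

Lemma lift_cls_clsq x (a : Mor G x) : lift_cls (clsq G H a) = lift_mor a.
Proof. exact/esym/lift_mor_simH/simH_repr_of. Qed.

Definition CGH_lift x : 'Hom(rsp (CGH K H) x, rsp W x) :=
  linfun (fun v : FreeVect K (quot G H x) => \sum_C v C *: lift_cls C).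

Lemma CGH_liftE x v : CGH_lift x v = \sum_C v C *: lift_cls C.
Proof.
rewrite linfunE // => k u v'; rewrite scaler_sumr -big_split.
by apply: eq_bigr => C _; rewrite !ffunE scalerDl scalerA.
Qed.

Lemma CGH_lift_unit_vec x (C : quot G H x) :
  CGH_lift x (unit_vec K C) = lift_cls C.
Proof.
rewrite CGH_liftE (bigD1 C) //= big1 ?addr0 => [|D /negbTE].
  by rewrite ffunE eqxx scale1r.
by rewrite ffunE eq_sym => ->; rewrite scale0r.
Qed.

Lemma CGH_lift_nat : is_nat CGH_lift.
Proof.
move=> x y g; apply/lfunP => v; rewrite !comp_lfunE /= !CGH_liftE.
rewrite sum_free_map_scale linear_sum; apply: eq_bigr => C _.
rewrite linearZ_LR /=.
by rewrite /quot_act -/(clsq G H _) lift_cls_clsq /lift_mor /= rep_actM.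
Qed.

Lemma CGH_lift_unit x : (CGH_lift x \o CGH_unit x)%VF = phi x.
Proof.
apply/lfunP => k; rewrite comp_lfunE CGH_unitE linearZ_LR /= CGH_lift_unit_vec.
by rewrite lift_cls_clsq phiE /lift_mor /= rep_act1.
Qed.

Lemma CGH_lift_unique (psi : forall x, 'Hom(rsp (CGH K H) x, rsp W x)) :
  is_nat psi -> (forall x, (psi x \o CGH_unit x)%VF = phi x) ->
  forall x, psi x = CGH_lift x.
Proof.
move=> nat_psi psi_unit x; apply/lfunP => v.
rewrite [in LHS](free_vect_expand _ _ v) linear_sum CGH_liftE.
apply: eq_bigr => C _; rewrite linearZ_LR /=; congr (_ *: _).
rewrite -(clsq_repr_of _ _ subH wideH C) lift_cls_clsq unit_vec_clsq.
case: (Defs.repr_of G H x C) => y g /=.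
have /lfunP/(_ (CGH_unit y 1)) := nat_psi _ _ g; rewrite !comp_lfunE => ->.
by have /lfunP/(_ 1) := psi_unit y; rewrite comp_lfunE => ->.
Qed.

End Lift.

Lemma CGH_Ind_Tri : is_Ind_Tri H (CGH K H) CGH_unit.
Proof.
split; [exact: CGH_rep | exact: CGH_unit_natH |] => W repW phi natH_phi.
exists (CGH_lift W phi); split.
- exact: CGH_lift_nat.
- exact: CGH_lift_unit.
- exact: CGH_lift_unique.
Qed.

End InducedTrivial.

Theorem theorem4p2 (G : groupoid) (H : subgpred G) :
  is_subgroupoid H -> wide H -> connected H ->
  [/\ is_rep (CGH Cfield H),
      exists eta, is_Ind_Tri H (CGH Cfield H) eta
    & forall (I : prerep Cfield G) eta, is_Ind_Tri H I eta ->
        rep_iso (CGH Cfield H) I].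
Proof.
move=> subH wideH _; have Ind := CGH_Ind_Tri Cfield _ _ subH wideH.
split; [exact: CGH_rep | by exists (CGH_unit Cfield G H) |].
by move=> I eta; apply: Ind_Tri_iso Ind.
Qed.
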